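(* There is a universal constant $c>0$ such that for every non-atomic probability measure $\mu$ on a measurable space $\mathcal X$ and every $\epsilon\in(0,1/2]$ there exist a family $\mathcal V$ of probability measures $\nu\ll\mu$ and a number $M_\epsilon>0$ with $$\mathrm{ICov}_{M_\epsilon}(\nu\|\mu)\le M_\epsilon\cdot\epsilon\quad\text{for all }\nu\in\mathcal V,$$ such that the following holds. Any estimator $\widehat Z$ that, for every $\nu\in\mathcal V$ and every $Z>0$, given i.i.d. $X_1,\dots,X_n\sim\mu$ and the values $\lambda(X_i)$ of $\lambda=Z\cdot\frac{d\nu}{d\mu}$, satisfies $(1-\epsilon)Z\le\widehat Z\le(1+\epsilon)Z$ with probability at least $2/3$, must use $n\ge c\,\epsilon^{-1}M_\epsilon$ samples.
   Context: For $\nu\ll\mu$ write $r=\frac{d\nu}{d\mu}$. The coverage is $\mathrm{Cov}_M(\nu\|\mu)=\nu(\{x:r(x)\ge M\})$ and the integrated coverage is $\mathrm{ICov}_M(\nu\|\mu)=\int_0^M\mathrm{Cov}_t(\nu\|\mu)\,dt$. An estimator is a measurable function of $(X_1,\dots,X_n,\lambda(X_1),\dots,\lambda(X_n))$ with no other access to $\nu$, $\lambda$ or $Z$. *)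

From HB Require Import structures.
From mathcomp Require Import all_boot all_order all_algebra.
From mathcomp Require Import all_classical all_reals all_analysis.
Set Implicit Arguments. Unset Strict Implicit. Unset Printing Implicit Defensive.
Import Order.TTheory GRing.Theory Num.Theory.
Local Open Scope classical_set_scope.
Local Open Scope ring_scope.

Definition non_atomic {R : realType} {d : measure_display} {T : measurableType d}
    (mu : {measure set T -> \bar R}) : Prop :=
  forall A : set T, measurable A -> (0 < mu A)%E ->
    exists B : set T, [/\ measurable B, B `<=` A, (0 < mu B)%E & (mu B < mu A)%E].

(* r is a version of the Radon-Nikodym derivative d nu / d mu
   (this also expresses nu << mu). *)
Definition is_density {R : realType} {d : measure_display} {T : measurableType d}
    (mu nu : {measure set T -> \bar R}) (r : T -> R) : Prop :=
  [/\ measurable_fun [set: T] r, (forall x, 0 <= r x) &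
      forall A : set T, measurable A -> nu A = (\int[mu]_(x in A) (r x)%:E)%E].

Definition Cov {R : realType} {d : measure_display} {T : measurableType d}
    (nu : {measure set T -> \bar R}) (r : T -> R) (M : R) : \bar R :=
  nu [set x | M <= r x].

Definition ICov {R : realType} {d : measure_display} {T : measurableType d}
    (nu : {measure set T -> \bar R}) (r : T -> R) (M : R) : \bar R :=
  (\int[@lebesgue_measure R]_(t in `[0%R, M]%classic) Cov nu r t)%E.

(* P is the law of n i.i.d. samples from mu on the space of n-tuples
   (product rule on measurable rectangles, which characterizes the
   product measure mu^{\otimes n}). *)
Definition is_iid_law {R : realType} {d : measure_display} {T : measurableType d}
    (mu : probability T R) (n : nat) (P : probability (n.-tuple T) R) : Prop :=
  forall A : 'I_n -> set T, (forall i, measurable (A i)) ->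
    P [set x : n.-tuple T | forall i, A i (tnth x i)]
    = ((\prod_(i < n) fine (mu (A i)))%:E)%E.

From HB Require Import structures.
From mathcomp Require Import all_boot all_order all_algebra.
From mathcomp Require Import all_classical all_reals all_analysis.
From mathcomp Require Import measurable_realfun ring lra.
Set Implicit Arguments. Unset Strict Implicit. Unset Printing Implicit Defensive.
Import Order.TTheory GRing.Theory Num.Theory.
Local Open Scope classical_set_scope.
Local Open Scope ring_scope.

(* Non-atomicity gives a rare set [D] with [0 < p = mu D <= eps^2].  Compare
   the target [mu] (density 1) with normalizing constant [Z = s], and the
   target whose density is [s] off [D] and [a = (1 - s (1 - p)) / p] on [D],
   with [Z = 1].  Off [D] both unnormalized densities equal [s], so a sample
   missing [D] (probability [(1 - p)^n]) cannot tell them apart, while the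
   acceptance intervals around [s] and [1] are disjoint; success with
   probability 2/3 for both thus forces [(1 - p)^n <= 2/3], hence [n p >= 1/3]
   by Bernoulli's inequality.  The integrated coverage of a two-valued density
   [r] is at most [E_nu r = s^2 (1 - p) + a^2 p <= M eps] with
   [M = (1 + a^2 p) / eps], and [p (1 + a^2 p) = p + (a p)^2 = O(eps^2)]
   turns [n p >= 1/3] into [n >= M / (60 eps)]. *)

Section density_prob.
Context d (T : measurableType d) (R : realType) (mu : {measure set T -> \bar R}).

Definition prob_density (f : T -> R) := [/\ measurable_fun [set: T] f,
  forall x, 0 <= f x & (\int[mu]_x (f x)%:E = 1)%E].

(* [hf] is unused in the body: it is an argument so that the measure and
   probability instances below can be declared on [density_prob hf]. *)
Definition density_prob f (hf : prob_density f) (A : set T) : \bar R :=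
  (\int[mu]_(x in A) (f x)%:E)%E.

Variables (f : T -> R) (hf : prob_density f).

Let density_prob0 : density_prob hf set0 = 0%E.
Proof. exact: integral_set0. Qed.

Let density_prob_ge0 A : (0 <= density_prob hf A)%E.
Proof. by have [_ f0 _] := hf; apply: integral_ge0 => x _; rewrite lee_fin. Qed.

Let density_prob_sigma_additive : semi_sigma_additive (density_prob hf).
Proof.
have [mf f0 _] := hf; apply: semi_sigma_additive_nng_induced => //.
exact/measurable_EFinP.
Qed.

HB.instance Definition _ := isMeasure.Build _ _ _ (density_prob hf)
  density_prob0 density_prob_ge0 density_prob_sigma_additive.

Let density_probT : density_prob hf [set: T] = 1%E.
Proof. by have [_ _ <-] := hf; congr integral; apply: funext. Qed.

HB.instance Definition _ := Measure_isProbability.Build _ _ _ (density_prob hf)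
  density_probT.

Lemma is_density_prob : is_density mu (density_prob hf) f.
Proof. by have [] := hf. Qed.

End density_prob.

Section two_valued.
Context d (T : measurableType d) (R : realType).
Variables (D : set T) (s a : R).
Hypothesis mD : measurable D.

Definition two_valued x := s * \1_(~` D) x + a * \1_D x.

Lemma two_valued_in x : D x -> two_valued x = a.
Proof.
move=> Dx; rewrite /two_valued !indicE (mem_set Dx).
by rewrite (@memNset _ (~` D)) ?mulr0 ?mulr1 ?add0r.
Qed.

Lemma two_valued_out x : ~ D x -> two_valued x = s.
Proof.
move=> Dx; rewrite /two_valued !indicE (memNset Dx).
by rewrite (@mem_set _ (~` D)) ?mulr0 ?mulr1 ?addr0.
Qed.

Lemma measurable_two_valued : measurable_fun [set: T] two_valued.
Proof.
by apply: measurable_funD; apply: measurable_funM => //;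
  apply: measurable_indic => //; exact: measurableC.
Qed.

Lemma Cov_two_valued (nu : {measure set T -> \bar R}) t :
  Cov nu two_valued t = (nu (~` D) * (t <= s)%R%:R%:E + nu D * (t <= a)%R%:R%:E)%E.
Proof.
have mDC : measurable (~` D) by exact: measurableC.
rewrite /Cov; have -> : [set x | t <= two_valued x] =
    (~` D `&` if t <= s then setT else set0) `|` (D `&` if t <= a then setT else set0).
  apply/seteqP; split=> x /=.
    have [Dx|Dx] := pselect (D x).
      by rewrite two_valued_in// => ->; right.
    by rewrite two_valued_out// => ->; left.
  case: ifP => ts; case: ifP => ta [[Dx []]|[Dx []]];
    by [rewrite two_valued_out|rewrite two_valued_in].
rewrite measureU /=; last 3 first.
- by case: ifP => _; apply: measurableI.
- by case: ifP => _; apply: measurableI.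
- by rewrite setIACA setICl set0I.
by case: ifP => _; case: ifP => _; rewrite ?setIT ?setI0 ?measure0 ?mule1 ?mule0.
Qed.

Hypotheses (s0 : 0 <= s) (a0 : 0 <= a).

Lemma two_valued_ge0 x : 0 <= two_valued x.
Proof. by rewrite addr_ge0 // mulr_ge0. Qed.

Lemma integral_two_valued (mu : {measure set T -> \bar R}) A : measurable A ->
  (\int[mu]_(x in A) (two_valued x)%:E = s%:E * mu (~` D `&` A) + a%:E * mu (D `&` A))%E.
Proof.
move=> mA; have mDC : measurable (~` D) by exact: measurableC.
have mZ (c : R) (B : set T) : measurable B ->
    measurable_fun A (fun x => (c * \1_B x)%:E).
  move=> mB; apply/measurable_EFinP.
  by apply: measurable_funM => //; exact: measurable_indic.
under eq_integral do rewrite EFinD.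
rewrite ge0_integralD //; last 4 first.
- by move=> x _; rewrite lee_fin mulr_ge0.
- exact: mZ.
- by move=> x _; rewrite lee_fin mulr_ge0.
- exact: mZ.
under eq_integral do rewrite EFinM.
under [X in (_ + X)%E]eq_integral do rewrite EFinM.
by rewrite !ge0_integralZl_EFin ?integral_indic //;
  exact/measurable_EFinP/measurable_indic.
Qed.

Lemma ICov_two_valued_le (nu : {measure set T -> \bar R}) M :
  (ICov nu two_valued M <= nu (~` D) * s%:E + nu D * a%:E)%E.
Proof.
have mI (c : R) : measurable_fun `[0%R, M]%classic
    (fun t => (\1_(`]-oo, c]%classic : set R) t)%:E).
  exact/measurable_EFinP/measurable_indic.
have itv_le (c : R) : 0 <= c -> (\int[lebesgue_measure]_(t in `[0%R, M]%classic)
    (\1_(`]-oo, c]%classic : set R) t)%:E <= c%:E)%E.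
  move=> c0; rewrite integral_indic//.
  apply: (@le_trans _ _ (lebesgue_measure `[0, c]%classic)).
    apply: le_measure; rewrite ?inE//; first exact: measurableI.
    by move=> t /= []; rewrite !in_itv/= => tc /andP[t0 _]; rewrite t0 tc.
  by rewrite lebesgue_measure_itv/= lte_fin; case: ifP; rewrite ?oppr0 ?adde0 ?lee_fin.
have indE (c t : R) : (t <= c)%R%:R = \1_(`]-oo, c]%classic : set R) t.
  by rewrite indicE mem_setE in_itv.
rewrite /ICov; under eq_integral do rewrite Cov_two_valued !indE.
rewrite ge0_integralD//; try by apply: measurable_funeM; exact: mI.
rewrite !ge0_integralZl//; try exact: mI.
by apply: leeD; apply: lee_wpmul2l => //; apply: itv_le.
Qed.

End two_valued.

Section two_valued_density.
Context d (T : measurableType d) (R : realType) (mu : probability T R).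
Variables (D : set T) (s a : R).
Hypotheses (mD : measurable D) (s0 : 0 <= s) (a0 : 0 <= a).
Let p := fine (mu D).
Hypothesis mass1 : s * (1 - p) + a * p = 1.

Let muD : mu D = p%:E.
Proof. by rewrite fineK// fin_num_measure. Qed.

Let muDC : mu (~` D) = (1 - p)%:E.
Proof. by rewrite probability_setC// muD. Qed.

Lemma prob_density_two_valued : prob_density mu (two_valued D s a).
Proof.
split; [exact: measurable_two_valued|exact: two_valued_ge0|].
by rewrite integral_two_valued// !setIT /= muD muDC -!EFinM -EFinD mass1.
Qed.

Lemma ICov_density_two_valued_le M :
  (ICov (density_prob prob_density_two_valued) (two_valued D s a) M <=
   (s ^+ 2 * (1 - p) + a ^+ 2 * p)%:E)%E.
Proof.
have nuE A : measurable A -> density_prob prob_density_two_valued A =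
    (s%:E * mu (~` D `&` A) + a%:E * mu (D `&` A))%E.
  by move=> mA; rewrite /density_prob integral_two_valued.
apply: le_trans (ICov_two_valued_le mD s0 a0 _ M) _.
have mDC : measurable (~` D) by exact: measurableC.
rewrite /= !nuE// /= !setIid setICl setICr !measure0 !mule0 adde0 add0e muD muDC.
by rewrite -!EFinM -EFinD lee_fin; nra.
Qed.

End two_valued_density.

Section iid.
Context d (T : measurableType d) (R : realType).

Lemma measurable_tuple_rect n (A : 'I_n -> set T) : (forall i, measurable (A i)) ->
  measurable [set x : n.-tuple T | forall i, A i (tnth x i)].
Proof.
move=> mA; rewrite (_ : [set x | _] =
  \bigcap_(i in [set: 'I_n]) ((@tnth n T)^~ i @^-1` A i)).
  apply: fin_bigcap_measurable; first exact: finite_finset.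
  by move=> i _; rewrite -[_ @^-1` _]setTI; exact: measurable_tnth.
by apply/seteqP; split=> [x xA i _|x xA i]; exact: xA.
Qed.

Definition tuple_cons n (xt : T * n.-tuple T) : n.+1.-tuple T := [tuple of xt.1 :: xt.2].

Lemma measurable_tuple_cons n : measurable_fun [set: T * n.-tuple T] (@tuple_cons n).
Proof. exact: measurable_cons. Qed.

HB.instance Definition _ n := isMeasurableFun.Build _ _ _ _ (@tuple_cons n)
  (@measurable_tuple_cons n).

Lemma iid_law_exists (mu : probability T R) n :
  exists P : probability (n.-tuple T) R, is_iid_law mu P.
Proof.
elim: n => [|n [P iidP]].
  exists (@dirac _ (0.-tuple T) [tuple] R) => A _.
  rewrite (_ : [set x | _] = setT); last by apply/seteqP; split=> // x _ [].
  by rewrite big_ord0 /= diracE in_setT.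
exists (distribution (mu \x P)%E (@tuple_cons n)) => A mA.
pose B := [set t : n.-tuple T | forall j, A (lift ord0 j) (tnth t j)].
have mB : measurable B := measurable_tuple_rect (fun j => mA (lift ord0 j)).
rewrite /distribution /pushforward /= (_ : _ @^-1` _ = A ord0 `*` B); last first.
  apply/seteqP; split=> [[x t] xtA|[x t] [x0 tB] i] /=.
    by split=> [|j]; [exact: (xtA ord0)|rewrite -(tnthS x); exact: xtA].
  by case: (unliftP ord0 i) => [j ->|->] //; rewrite tnthS.
rewrite product_measure1E// big_ord_recl EFinM fineK ?fin_num_measure//.
by congr (_ * _)%E; exact: (iidP _ (fun j => mA (lift ord0 j))).
Qed.

End iid.

Section non_atomic.
Context d (T : measurableType d) (R : realType) (mu : probability T R).
Hypothesis mu_na : non_atomic mu.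

Let muE A : measurable A -> mu A = (fine (mu A))%:E.
Proof. by move=> mA; rewrite fineK// fin_num_measure. Qed.

Lemma non_atomic_halve A : measurable A -> 0 < fine (mu A) ->
  exists2 B, measurable B & 0 < fine (mu B) /\ 2 * fine (mu B) <= fine (mu A).
Proof.
move=> mA A0; have [|B [mB BA B0 BltA]] := mu_na mA; first by rewrite /= muE// lte_fin.
move: B0 BltA => /=; rewrite (muE mA) (muE mB) !lte_fin => B0 BltA.
have [B_half|B_big] := leP (2 * fine (mu B)) (fine (mu A)); first by exists B.
have ABE : fine (mu (A `\` B)) = fine (mu A) - fine (mu B).
  rewrite measureD//=; last by rewrite muE// ltry.
  by rewrite (setIidr BA) fineB ?fin_num_measure.
exists (A `\` B); first exact: measurableD.
rewrite ABE; split; lra.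
Qed.

Lemma non_atomic_small_set e : 0 < e ->
  exists2 D, measurable D & 0 < fine (mu D) <= e.
Proof.
move=> e0; have [k ek] : exists k : nat, e^-1 < k%:R.
  by exists (Num.Def.archi_bound e^-1); apply: archi_boundP; rewrite invr_ge0 ltW.
have [D mD [D0 Dk]] : exists2 D, measurable D &
    0 < fine (mu D) /\ 2 ^+ k * fine (mu D) <= 1.
  elim: k {ek} => [|k [D mD [D0 Dk]]].
    by exists setT => //; rewrite probability_setT /= mul1r ltr01.
  have [B mB [B0 BD]] := non_atomic_halve mD D0.
  exists B => //; split=> //; rewrite exprSr -mulrA.
  by apply: le_trans Dk; rewrite ler_pM2l// exprn_gt0.
exists D => //; rewrite D0 /=.
have k2k : k%:R <= 2 ^+ k :> R by rewrite -natrX ler_nat ltnW// ltn_expl.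
rewrite -[e]mulr1 -ler_pdivrMl//; apply: le_trans Dk; rewrite ler_pM2r//.
by apply: le_trans k2k; rewrite ltW// -invf_div divr1.
Qed.

End non_atomic.

Lemma bernoulli_ineq (R : realFieldType) (x : R) n :
  -1 <= x -> 1 + n%:R * x <= (1 + x) ^+ n.
Proof.
move=> x_ge; elim: n => [|n IH]; first by rewrite mul0r addr0 expr0.
have x1 : 0 <= 1 + x by rewrite -lerBlDl sub0r.
rewrite exprS -natr1; apply: le_trans (ler_wpM2l x1 IH).
have : 0 <= n%:R * x * x by rewrite -mulrA mulr_ge0// -expr2 sqr_ge0.
nra.
Qed.

Section union_bound.
Context d (T : measurableType d) (R : realType) (P : probability T R).

Lemma prob_le_of_setI_eq0 G E1 E2 : measurable G -> measurable E1 -> measurable E2 ->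
  G `&` E1 `&` E2 = set0 -> fine (P G) <= (1 - fine (P E1)) + (1 - fine (P E2)).
Proof.
move=> mG mE1 mE2 GE12.
have mC (E : set T) : measurable E -> measurable (~` E) by exact: measurableC.
have PC (E : set T) : measurable E -> fine (P (~` E)) = 1 - fine (P E).
  by move=> mE; rewrite probability_setC// fineB ?fin_num_measure.
rewrite -PC// -PC// -lee_fin EFinD !fineK ?fin_num_measure//; try exact: mC.
apply: le_trans (measureU2 _ (mC _ mE1) (mC _ mE2)); apply: le_measure; rewrite ?inE//.
  by apply: measurableU; exact: mC.
move=> x Gx; apply/not_andP => -[E1x E2x].
by have : (G `&` E1 `&` E2) x by []; rewrite GE12.
Qed.

End union_bound.

Section two_point.
Context d (T : measurableType d) (R : realType) (mu : probability T R).

Lemma measurable_estimator_event n (Zhat : n.-tuple T * n.-tuple R -> R)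
    (g : T -> R) lo hi :
  measurable_fun [set: n.-tuple T * n.-tuple R] Zhat -> measurable_fun [set: T] g ->
  measurable [set x : n.-tuple T | lo <= Zhat (x, map_tuple g x) <= hi].
Proof.
move=> mZ mg; have mgx : measurable_fun [set: n.-tuple T] (map_tuple g).
  apply/measurable_fun_tnthP => i.
  rewrite (_ : _ \o _ = g \o (@tnth n T)^~ i); last first.
    by apply: funext => x /=; rewrite tnth_map.
  exact: measurableT_comp (measurable_tnth i).
have mZg : measurable_fun [set: n.-tuple T] (fun x => Zhat (x, map_tuple g x)).
  by apply: measurableT_comp mZ _; exact: measurable_fun_pair.
have := mZg measurableT `[lo, hi]%classic (measurable_itv _).
by rewrite setTI; congr measurable; apply/seteqP; split=> x /=; rewrite mem_setE in_itv.
Qed.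

Lemma iid_prob_avoid n (P : probability (n.-tuple T) R) D :
  measurable D -> is_iid_law mu P ->
  P [set x | forall i : 'I_n, (~` D) (tnth x i)] = ((1 - fine (mu D)) ^+ n)%:E.
Proof.
move=> mD iidP; rewrite (iidP (fun=> ~` D)) => [|_]; last exact: measurableC.
by rewrite prodr_const card_ord probability_setC// fineB ?fin_num_measure.
Qed.

(* Le Cam's two-point argument: when every sample misses [D] the estimator
   sees the same data under [g1] and [g2], and its two targets are disjoint. *)
Lemma two_point_sample_bound n (P : probability (n.-tuple T) R) D
    (Zhat : n.-tuple T * n.-tuple R -> R) (g1 g2 : T -> R) (lo1 hi1 lo2 hi2 : R) :
  measurable D -> is_iid_law mu P -> measurable_fun [set: n.-tuple T * n.-tuple R] Zhat ->
  measurable_fun [set: T] g1 -> measurable_fun [set: T] g2 ->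
  (forall x, ~ D x -> g1 x = g2 x) -> hi1 < lo2 ->
  ((2 / 3 : R)%:E <= P [set x | (lo1 <= Zhat (x, map_tuple g1 x) <= hi1)%R])%E ->
  ((2 / 3 : R)%:E <= P [set x | (lo2 <= Zhat (x, map_tuple g2 x) <= hi2)%R])%E ->
  1 <= 3 * (n%:R * fine (mu D)).
Proof.
move=> mD iidP mZ mg1 mg2 g12 hilo E1_ge E2_ge.
set G := [set x | forall i : 'I_n, (~` D) (tnth x i)].
have mG : measurable G := measurable_tuple_rect (fun=> measurableC mD).
have disj : G `&` [set x | lo1 <= Zhat (x, map_tuple g1 x) <= hi1]
              `&` [set x | lo2 <= Zhat (x, map_tuple g2 x) <= hi2] = set0.
  apply/seteqP; split=> // x [[Gx /andP[_ hi]] /andP[lo _]].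
  have gx : map_tuple g1 x = map_tuple g2 x.
    by apply: eq_from_tnth => i; rewrite !tnth_map g12//; exact: Gx.
  by move: hi; rewrite gx => /(le_trans lo); apply/negP; rewrite -ltNge.
have fine_ge E : measurable E -> ((2 / 3 : R)%:E <= P E)%E -> 2 / 3 <= fine (P E).
  by move=> mE; rewrite -lee_fin fineK ?fin_num_measure.
have mE1 := measurable_estimator_event lo1 hi1 mZ mg1.
have mE2 := measurable_estimator_event lo2 hi2 mZ mg2.
have := prob_le_of_setI_eq0 P mG mE1 mE2 disj; rewrite iid_prob_avoid//=.
have := fine_ge _ mE1 E1_ge; have := fine_ge _ mE2 E2_ge.
have p_le1 : -1 <= - fine (mu D).
  by rewrite lerN2 -lee_fin fineK ?fin_num_measure// probability_le1.
have := bernoulli_ineq n p_le1; rewrite mulrN.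
lra.
Qed.

End two_point.

Section parameters.
Context (R : realType) (eps p : R).

(* [(1 + eps) * s_eps = (1 - eps) ^+ 2 < 1 - eps]: the acceptance intervals
   for [Z = s_eps] and [Z = 1] are disjoint. *)
Definition s_eps := (1 - eps) ^+ 2 / (1 + eps).
Definition a_eps := (1 - s_eps * (1 - p)) / p.
Definition M_eps := (1 + a_eps ^+ 2 * p) / eps.

Let s_epsM : 0 < eps -> s_eps * (1 + eps) = (1 - eps) ^+ 2.
Proof. by move=> eps0; rewrite /s_eps divfK// gt_eqF// ltr_wpDl. Qed.

Let a_epsM : 0 < p -> a_eps * p = 1 - s_eps * (1 - p).
Proof. by move=> p0; rewrite /a_eps divfK// gt_eqF. Qed.

Lemma s_eps_gt0 : 0 < eps < 1 -> 0 < s_eps.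
Proof. by move=> /andP[eps0 eps1]; rewrite /s_eps divr_gt0 ?exprn_gt0//; lra. Qed.

Lemma s_eps_le1 : 0 < eps < 1 -> s_eps <= 1.
Proof. by move=> /andP[eps0 eps1]; rewrite /s_eps ler_pdivrMr; nra. Qed.

Lemma s_eps_separated : 0 < eps < 1 -> (1 + eps) * s_eps < (1 - eps) * 1.
Proof. by move=> /andP[eps0 eps1]; rewrite mulrC s_epsM// mulr1; nra. Qed.

Lemma a_eps_ge0 : 0 < eps < 1 -> 0 < p <= 1 -> 0 <= a_eps.
Proof.
move=> eps01 /andP[p0 p1]; have s0 := s_eps_gt0 eps01; have s1 := s_eps_le1 eps01.
by rewrite /a_eps divr_ge0 ?ltW//; nra.
Qed.

Lemma two_valued_mass_eps : 0 < p -> s_eps * (1 - p) + a_eps * p = 1.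
Proof. by move=> p0; rewrite a_epsM//; ring. Qed.

Lemma M_eps_mul : 0 < eps -> M_eps * eps = 1 + a_eps ^+ 2 * p.
Proof. by move=> eps0; rewrite /M_eps divfK ?gt_eqF. Qed.

Lemma M_eps_gt0 : 0 < eps -> 0 <= p -> 0 < M_eps.
Proof. by move=> eps0 p0; rewrite divr_gt0// ltr_pwDl// mulr_ge0 ?sqr_ge0. Qed.

Lemma one_le_M_eps : 0 < eps -> 0 <= p -> 1 <= M_eps * eps.
Proof. by move=> eps0 p0; rewrite M_eps_mul// lerDl mulr_ge0 ?sqr_ge0. Qed.

Lemma ICov_bound_eps : 0 < eps < 1 -> 0 < p <= 1 ->
  s_eps ^+ 2 * (1 - p) + a_eps ^+ 2 * p <= M_eps * eps.
Proof.
move=> eps01 /andP[p0 p1]; have /andP[eps0 _] := eps01.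
have s0 := s_eps_gt0 eps01; have s1 := s_eps_le1 eps01.
by rewrite M_eps_mul//; nra.
Qed.

Lemma sample_bound_eps n : 0 < eps <= 1 / 2 -> 0 < p <= eps ^+ 2 ->
  1 <= 3 * (n%:R * p) -> ratr (1 / 60 : rat) / eps * M_eps <= n%:R.
Proof.
move=> /andP[eps0 eps_le] /andP[p0 p_le] np; rewrite fmorph_div rmorph1 rmorph_nat.
have eps01 : 0 < eps < 1 by rewrite eps0; lra.
have q_le : a_eps * p <= 4 * eps.
  have s_ge : 1 - 3 * eps <= s_eps.
    by rewrite -(@ler_pM2r _ (1 + eps)) ?(s_epsM eps0); nra.
  have s1 := s_eps_le1 eps01.
  by rewrite a_epsM//; nra.
have : p * (1 + a_eps ^+ 2 * p) <= 17 * eps ^+ 2.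
  have p01 : 0 < p <= 1 by rewrite p0; nra.
  have q0 : 0 <= a_eps * p by rewrite mulr_ge0 ?(a_eps_ge0 eps01 p01) ?ltW.
  rewrite (_ : _ * _ = p + (a_eps * p) ^+ 2); last by ring.
  nra.
rewrite /M_eps; set m := 1 + _ => pm.
rewrite (_ : _ / eps * _ = m / (60 * eps ^+ 2)); last by field; rewrite gt_eqF.
rewrite ler_pdivrMr ?mulr_gt0 ?exprn_gt0//.
rewrite -(ler_pM2l p0); nra.
Qed.

End parameters.

Theorem theorem9 :
  exists c : rat, 0 < c /\
  forall (R : realType) (d : measure_display) (T : measurableType d)
         (mu : probability T R),
    non_atomic mu ->
    forall eps : R, 0 < eps -> eps <= 1 / 2 ->
    exists (V : set (probability T R * (T -> R))) (M : R),
      0 < M /\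
      (forall nu r, V (nu, r) -> is_density mu nu r) /\
      (forall nu r, V (nu, r) -> (ICov nu r M <= (M * eps)%:E)%E) /\
      forall (n : nat) (Zhat : (n.-tuple T * n.-tuple R)%type -> R),
        measurable_fun [set: (n.-tuple T * n.-tuple R)%type] Zhat ->
        (forall nu r, V (nu, r) ->
         forall Z : R, 0 < Z ->
         forall P : probability (n.-tuple T) R, is_iid_law mu P ->
           (P [set x : n.-tuple T |
                 ((1 - eps) * Z <= Zhat (x, map_tuple (fun y => Z * r y) x)
                  <= (1 + eps) * Z)%R] >= (2 / 3 : R)%:E)%E) ->
        ratr c / eps * M <= n%:R.
Proof.
exists (1 / 60); split=> // R d T mu mu_na eps eps0 eps_le.
have [D mD /andP[p0 p_le]] := non_atomic_small_set mu_na (exprn_gt0 2 eps0).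
set p := fine (mu D) in p0 p_le.
have eps01 : 0 < eps < 1 by rewrite eps0; lra.
have p01 : 0 < p <= 1 by rewrite p0; nra.
have mass11 : 1 * (1 - p) + 1 * p = 1 by rewrite !mul1r subrK.
have s0 := ltW (s_eps_gt0 eps01); have a0 := a_eps_ge0 eps01 p01.
have mass := two_valued_mass_eps eps p0.
have h1 := prob_density_two_valued mD ler01 ler01 mass11.
have h2 := prob_density_two_valued mD s0 a0 mass.
pose nu1 : probability T R := density_prob h1.
pose nu2 : probability T R := density_prob h2.
exists [set nr | nr = (nu1, two_valued D 1 1) \/
                 nr = (nu2, two_valued D (s_eps eps) (a_eps eps p))].
exists (M_eps eps p); split; first by apply: M_eps_gt0; rewrite ?ltW.
split; first by move=> nu r [] [-> ->]; exact: is_density_prob.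
split.
  move=> nu r [] [-> ->].
    apply: le_trans (ICov_density_two_valued_le mD ler01 ler01 mass11 _) _.
    by rewrite lee_fin -/p expr1n !mul1r subrK; exact: one_le_M_eps (ltW p0).
  apply: le_trans (ICov_density_two_valued_le mD s0 a0 mass _) _.
  by rewrite lee_fin -/p; exact: ICov_bound_eps.
move=> n Zhat mZ succeeds; have [P iidP] := iid_law_exists mu n.
apply: sample_bound_eps; rewrite ?eps0 ?p0 //.
apply: (two_point_sample_bound mD iidP mZ _ _ _ (s_eps_separated eps01)
  (succeeds _ _ (or_introl erefl) _ (s_eps_gt0 eps01) P iidP)
  (succeeds _ _ (or_intror erefl) _ ltr01 P iidP)).
1,2: by apply: measurable_funM => //; exact: measurable_two_valued.
by move=> x Dx; rewrite !two_valued_out// mulr1 mul1r.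
Qed.
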